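(* Let $R$ be a ring with identity and let $a \in R$ satisfy $a^2 = 1$. If $a = e + q$ where $e \in R$ is an idempotent ($e^2 = e$) and $q \in R$ is nilpotent, then $e = 1$. In particular, every involution of $R$ that is the sum of an idempotent and a nilpotent is of the form $1 + q$ for some nilpotent $q \in R$.
   Context: Rings are associative with identity (not necessarily commutative). *)

From mathcomp Require Import all_boot all_algebra.
Set Implicit Arguments. Unset Strict Implicit. Unset Printing Implicit Defensive.
Import GRing.Theory.
Local Open Scope ring_scope.

Definition nilpotent_el (R : pzRingType) (q : R) : Prop := exists n : nat, q ^+ n = 0.

Definition idempotent_el (R : pzRingType) (e : R) : Prop := e * e = e.

From mathcomp Require Import all_boot all_algebra.
Set Implicit Arguments. Unset Strict Implicit. Unset Printing Implicit Defensive.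
Import GRing.Theory.
Local Open Scope ring_scope.

(** Squaring [a = e + q] and multiplying by [e] on either side shows that
    [r = e q - q e] satisfies [r (1 + q) = - q r].  As [1 + q] is invertible,
    [r = (-q)^n r (1 + q)^-n] for every [n], so [r = 0]: [e] and [q] commute.
    Then [1 - e = q (2 e + q)] is an idempotent that is nilpotent, hence zero. *)

Section IdempotentNilpotent.

Variable R : pzRingType.
Implicit Types e q r w x : R.

Lemma nilpotentN q : nilpotent_el q -> nilpotent_el (- q).
Proof. by case=> n qn0; exists n; rewrite exprNn qn0 mulr0. Qed.

Lemma nilpotentM_comm q x : GRing.comm q x -> nilpotent_el q -> nilpotent_el (q * x).
Proof. by move=> cqx [n qn0]; exists n; rewrite exprMn_comm // qn0 mul0r. Qed.

Lemma idempotent_subr1 e : idempotent_el e -> idempotent_el (1 - e).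
Proof. by rewrite /idempotent_el => ee; rewrite mulrBl mul1r mulrBr mulr1 ee subrr subr0. Qed.

Lemma idempotent_nilpotent_eq0 e : idempotent_el e -> nilpotent_el e -> e = 0.
Proof.
move=> ee [n en0]; have eSn : forall m, e ^+ m.+1 = e.
  by elim=> [|m IHm]; rewrite ?expr1 // exprSr IHm.
by rewrite -(eSn n) exprSr en0 mul0r.
Qed.

Lemma nilpotent_add1_rinv q : nilpotent_el q -> exists w, (1 + q) * w = 1.
Proof.
case=> n qn0; exists (\sum_(i < n) (- q) ^+ i).
apply: oppr_inj; rewrite -mulNr opprD addrC -subrX1.
by rewrite exprNn qn0 mulr0 add0r.
Qed.

Lemma sandwich_iter r x w n : r = x * r * w -> r = x ^+ n * r * w ^+ n.
Proof.
move=> rE; elim: n => [|n IHn]; first by rewrite !expr0 mul1r mulr1.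
by rewrite {1}IHn {1}rE exprSr exprS !mulrA.
Qed.

Lemma skew_nilpotent_eq0 q r : nilpotent_el q -> r + r * q + q * r = 0 -> r = 0.
Proof.
move=> qnil rq0; have [w qw1] := nilpotent_add1_rinv qnil.
have rq : r * (1 + q) = - q * r.
  by apply/eqP; rewrite mulNr -addr_eq0 mulrDr mulr1 rq0.
have rE : r = - q * r * w by rewrite -rq -mulrA qw1 mulr1.
have [n qn0] := nilpotentN qnil.
by rewrite (sandwich_iter n rE) qn0 !mul0r.
Qed.

Lemma idempotent_involution_skew e q :
  idempotent_el e -> (e + q) ^+ 2 = 1 ->
  let r := e * q - q * e in r + r * q + q * r = 0.
Proof.
rewrite /idempotent_el => ee a2.
have expand : e + e * q + q * e + q * q = 1.
  by rewrite -a2 expr2 mulrDl !mulrDr ee !addrA.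
have left : e * q + e * q * q = - (e * q * e).
  apply/eqP; rewrite -addr_eq0 addrAC; apply/eqP/(@addrI _ e).
  by rewrite addr0 -[RHS]mulr1 -expand !mulrDr !mulrA ee !addrA.
have right : q * e + q * q * e = - (e * q * e).
  apply/eqP; rewrite -addr_eq0 addrC addrA; apply/eqP/(@addrI _ e).
  by rewrite addr0 -[RHS]mul1r -expand !mulrDl -!mulrA ee !mulrA !addrA.
rewrite mulrBl mulrBr !mulrA -addrA (addrA (e * q * q - q * e * q)) addrNK.
by rewrite addrACA -opprD left right subrr.
Qed.

End IdempotentNilpotent.

Theorem proposition1 (R : pzRingType) (a e q : R) :
  a ^+ 2 = 1 -> idempotent_el e -> nilpotent_el q -> a = e + q ->
  e = 1 /\ exists q' : R, nilpotent_el q' /\ a = 1 + q'.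
Proof.
move=> a2 ee qnil aE.
have ceq : e * q = q * e.
  by apply/subr0_eq/(skew_nilpotent_eq0 qnil)/idempotent_involution_skew; rewrite -?aE.
have subr1E : 1 - e = q * (e + e + q).
  apply/eqP; rewrite subr_eq -a2 aE expr2 mulrDl !mulrDr ee ceq.
  by rewrite [eqbRHS]addrC !addrA.
have cq : GRing.comm q (e + e + q).
  by apply/commrD/commr_refl; apply/commrD; exact/esym.
have /subr0_eq e1 : 1 - e = 0.
  apply: idempotent_nilpotent_eq0; first exact: idempotent_subr1.
  by rewrite subr1E; exact: nilpotentM_comm.
by split=> //; exists q; rewrite aE -e1.
Qed.
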